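(* Let $t\ge2$ and let $A_1,\dots,A_t$ be jointly distributed random variables on a finite set whose joint distribution is invariant under all permutations of $(A_1,\dots,A_t)$. Let $\{A_1\cdots A_t\}$ denote their joint distribution and $\{A_1\}\cdots\{A_t\}$ the product of their marginal distributions. If $d_H(\{A_1\cdots A_t\},\{A_1\}\cdots\{A_t\})\ge\epsilon$, then $H(A_t\mid A_1,\dots,A_{t-1})\le H(A_1)-2\epsilon^2/t^2$.
   Context: $H$ denotes Shannon entropy with natural logarithm and $H(X\mid Y)=\mathbb{E}_{y}H(X\mid Y=y)$. The Hellinger distance between distributions $p,q$ on a finite set is $d_H(p,q)=\left(1-\sum_i\sqrt{p_iq_i}\right)^{1/2}$. *)

From mathcomp Require Import all_boot all_fingroup.
From Stdlib Require Import Reals.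

Set Implicit Arguments.
Unset Strict Implicit.
Unset Printing Implicit Defensive.

Definition Rsum (T : finType) (F : T -> R) : R := \big[Rplus/0%R]_(x : T) F x.

Definition is_distr (T : finType) (p : T -> R) : Prop :=
  (forall x, (0 <= p x)%R) /\ Rsum p = 1%R.

Definition xlnx (x : R) : R := if Rlt_dec 0 x then (x * ln x)%R else 0%R.

Definition entropy (T : finType) (p : T -> R) : R := (- Rsum (fun x => xlnx (p x)))%R.

Definition pushforward (T Y : finType) (p : T -> R) (g : T -> Y) (y : Y) : R :=
  \big[Rplus/0%R]_(x : T | g x == y) p x.

Definition cond_entropy (T X Y : finType) (p : T -> R) (f : T -> X) (g : T -> Y) : R :=
  Rsum (fun y : Y =>
    (pushforward p g y *
     entropy (fun a : X =>
       (\big[Rplus/0%R]_(x : T | (f x == a) && (g x == y)) p x) / pushforward p g y))%R).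

Definition marginal (t : nat) (S : finType) (p : {ffun 'I_t -> S} -> R) (i : 'I_t) : S -> R :=
  pushforward p (fun x => x i).

Definition prod_marginals (t : nat) (S : finType) (p : {ffun 'I_t -> S} -> R)
  : {ffun 'I_t -> S} -> R :=
  fun x => \big[Rmult/1%R]_(i : 'I_t) marginal p i (x i).

Definition hellinger (T : finType) (p q : T -> R) : R :=
  sqrt (1 - Rsum (fun x => sqrt (p x * q x)))%R.

Definition exchangeable (t : nat) (S : finType) (p : {ffun 'I_t -> S} -> R) : Prop :=
  forall (s : {perm 'I_t}) (x : {ffun 'I_t -> S}), p [ffun i => x (s i)] = p x.

Lemma lastIdx_lt (t : nat) : (0 < t)%N -> (t.-1 < t)%N.
Proof. by rewrite ltn_predL. Qed.

(* first index (A_1) and last index (A_t) *)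
Definition firstIdx (t : nat) (ht : (0 < t)%N) : 'I_t := Ordinal ht.
Definition lastIdx (t : nat) (ht : (0 < t)%N) : 'I_t := Ordinal (lastIdx_lt ht).

Definition init_coords (t : nat) (S : finType) (x : {ffun 'I_t -> S}) : {ffun 'I_t.-1 -> S} :=
  [ffun i : 'I_t.-1 => x (widen_ord (leq_pred t) i)].

(* Write H(X_K | X_J) for blocks J, K of coordinates through the
   masses P(X_J = x_J) of cylinders.  Conditioning reduces entropy, and under
   exchangeability a relabelling of coordinates preserves these quantities; so
   in the chain rule H(p) = sum_k H(X_k | X_(<k)) the last term c is the
   smallest, whence t c <= H(p).  Exchangeability also makes every marginal
   entropy equal to H(X_1), so that KL(p || prod_k p_k) = t H(X_1) - H(p).
   Finally KL >= 0 (subadditivity) and KL >= 2 (1 - sum sqrt (p q)) = 2 d_H^2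
   (pointwise from ln v <= v - 1), giving t c <= t H(X_1) - 2 eps^2, which is
   stronger than the claim since t >= 1. *)

From HB Require Import structures.
From mathcomp Require Import all_boot all_fingroup zify.
From Stdlib Require Import Reals Lra Psatz.

Set Implicit Arguments.
Unset Strict Implicit.
Unset Printing Implicit Defensive.

Lemma Rplus_assoc_law : associative Rplus. Proof. by move=> *; ring. Qed.
Lemma Rmult_assoc_law : associative Rmult. Proof. by move=> *; ring. Qed.
HB.instance Definition _ :=
  Monoid.isComLaw.Build R 0%R Rplus Rplus_assoc_law Rplus_comm Rplus_0_l.
HB.instance Definition _ :=
  Monoid.isComLaw.Build R 1%R Rmult Rmult_assoc_law Rmult_comm Rmult_1_l.
HB.instance Definition _ := Monoid.isMulLaw.Build R 0%R Rmult Rmult_0_l Rmult_0_r.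
HB.instance Definition _ :=
  Monoid.isAddLaw.Build R Rmult Rplus Rmult_plus_distr_r Rmult_plus_distr_l.

Notation "\sum_ ( i <- r | P ) F" := (\big[Rplus/0%R]_(i <- r | P%B) F%R) : R_scope.
Notation "\sum_ ( i | P ) F" := (\big[Rplus/0%R]_(i | P%B) F%R) : R_scope.
Notation "\sum_ ( i : t ) F" := (\big[Rplus/0%R]_(i : t) F%R) : R_scope.
Notation "\sum_ ( i < n ) F" := (\big[Rplus/0%R]_(i < n%nat) F%R) : R_scope.

Local Open Scope R_scope.

Lemma sumR_ge0 (I : finType) (P : pred I) (F : I -> R) :
  (forall i, P i -> 0 <= F i) -> 0 <= \sum_(i | P i) F i.
Proof. by move=> F_ge0; apply: (big_ind (fun x => 0 <= x)) => // *; lra. Qed.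

Lemma sumR_le (I : finType) (P : pred I) (F G : I -> R) :
  (forall i, P i -> F i <= G i) -> \sum_(i | P i) F i <= \sum_(i | P i) G i.
Proof. by move=> leFG; apply: (big_ind2 (fun x y => x <= y)) => // *; lra. Qed.

Lemma sumR_opp (I : Type) (r : seq I) (P : pred I) (F : I -> R) :
  \sum_(i <- r | P i) (- F i) = - \sum_(i <- r | P i) F i.
Proof. by rewrite (big_morph Ropp (id1 := 0) (op1 := Rplus)) //; [move=> * | ]; lra. Qed.

Lemma sumR_sub (I : Type) (r : seq I) (P : pred I) (F G : I -> R) :
  \sum_(i <- r | P i) (F i - G i) = \sum_(i <- r | P i) F i - \sum_(i <- r | P i) G i.
Proof. by rewrite /Rminus big_split /= sumR_opp. Qed.

Lemma sumR_const_ord (n : nat) (c : R) : \sum_(i < n) c = INR n * c.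
Proof.
rewrite big_const_ord; elim: n => [|n IH] /=; first lra.
by rewrite IH; case: n {IH} => /= *; lra.
Qed.

Lemma telescopeR (f : nat -> R) (n : nat) :
  \big[Rplus/0]_(0 <= k < n) (f k.+1 - f k) = f n - f 0%nat.
Proof.
elim: n => [|n IH]; first by rewrite big_geq //; ring.
by rewrite big_nat_recr //= IH; ring.
Qed.

Lemma ln_le_sub1 (u : R) : 0 < u -> ln u <= u - 1.
Proof. by move=> u_gt0; have := exp_ineq1_le (ln u); rewrite exp_ln //; lra. Qed.

Lemma ln_div (x y : R) : 0 < x -> 0 < y -> ln (x / y) = ln x - ln y.
Proof.
move=> x_gt0 y_gt0; rewrite /Rdiv ln_mult ?ln_Rinv //.
exact: Rinv_0_lt_compat.
Qed.

(* ln v <= v - 1 for the ratio v = (d a) / (c b) of two likelihood ratios. *)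
Lemma ln_ratios_ge (a b c d : R) :
  0 < a -> 0 < b -> 0 < c -> 0 < d ->
  1 - d * a / (c * b) <= ln (c / d) - ln (a / b).
Proof.
move=> a_gt0 b_gt0 c_gt0 d_gt0.
have ratio_gt0 : 0 < d * a / (c * b).
  by apply: Rdiv_lt_0_compat; apply: Rmult_lt_0_compat.
have := ln_le_sub1 ratio_gt0.
rewrite !ln_div ?ln_mult //; try exact: Rmult_lt_0_compat.
lra.
Qed.

Lemma ln_prod (I : Type) (r : seq I) (F : I -> R) :
  (forall i, 0 < F i) ->
  ln (\big[Rmult/1]_(i <- r) F i) = \sum_(i <- r | true) ln (F i).
Proof.
move=> F_gt0; elim: r => [|a r IH]; first by rewrite !big_nil ln_1.
rewrite !big_cons ln_mult ?IH //.
by apply: (big_ind (fun x => 0 < x)) => // *; [lra | exact: Rmult_lt_0_compat].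
Qed.

Lemma xlnxE (x : R) : 0 <= x -> xlnx x = x * ln x.
Proof.
rewrite /xlnx => x_ge0; case: Rlt_dec => //= x_le0.
have -> : x = 0 by lra.
ring.
Qed.

Lemma xlnx0 : xlnx 0 = 0.
Proof. by rewrite xlnxE ?Rmult_0_l; lra. Qed.

Lemma Rinv_ge0 (x : R) : 0 <= x -> 0 <= / x.
Proof.
case/Rle_lt_or_eq_dec => [x_gt0 | <-]; last by rewrite Rinv_0; lra.
exact/Rlt_le/Rinv_0_lt_compat.
Qed.

(* x / x is 1, or 0 when x = 0. *)
Lemma Rdiv_self_le1 (x : R) : 0 <= x -> x * / x <= 1.
Proof.
case/Rle_lt_or_eq_dec => [x_gt0 | <-]; last by rewrite Rinv_0; lra.
by rewrite Rinv_r; lra.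
Qed.

(* Pointwise form of "Kullback-Leibler divergence dominates twice the squared
   Hellinger distance": a ln (a/b) >= 2 (a - sqrt (a b)).  It is ln v <= v - 1
   applied to v = sqrt (b / a). *)
Lemma xlnx_ratio_ge_hellinger (a b : R) :
  0 <= a -> 0 <= b -> (0 < a -> 0 < b) ->
  2 * (a - sqrt (a * b)) <= a * ln (a / b).
Proof.
move=> a_ge0 b_ge0 supp.
case: (Rle_lt_or_eq_dec _ _ a_ge0) => [a_gt0 | <-]; last first.
  by rewrite Rmult_0_l sqrt_0; lra.
have b_gt0 := supp a_gt0.
have sa := sqrt_lt_R0 _ a_gt0; have sb := sqrt_lt_R0 _ b_gt0.
have lnsq (u : R) : 0 < u -> ln u = 2 * ln (sqrt u).
  move=> u_gt0; have su := sqrt_lt_R0 _ u_gt0.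
  by rewrite -{1}(sqrt_sqrt u) ?ln_mult //; lra.
have := ln_le_sub1 (Rdiv_lt_0_compat _ _ sb sa).
rewrite ln_div // ln_div // (lnsq a) // (lnsq b) // sqrt_mult //.
move: (sqrt_sqrt a a_ge0) sa sb.
move: (sqrt a) (sqrt b) (ln (sqrt a)) (ln (sqrt b)) => u v lu lv ea u_gt0 v_gt0 hl.
have : a * (lv - lu) <= a * (v / u - 1) by apply: Rmult_le_compat_l; lra.
have -> : a * (v / u - 1) = u * v - a by rewrite -ea; field; lra.
lra.
Qed.

(* Squaring the bound eps <= sqrt u; the square root is truncated at 0. *)
Lemma sqrt_lower_bound (eps u : R) :
  0 <= eps -> eps <= sqrt u -> eps ^ 2 <= Rmax 0 u.
Proof.
move=> eps_ge0 le_eps; case: (Rle_dec 0 u) => [u_ge0 | u_lt0].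
  have : eps * eps <= sqrt u * sqrt u by apply: Rmult_le_compat.
  by rewrite sqrt_sqrt // Rmax_right //; lra.
rewrite sqrt_neg_0 in le_eps; last lra.
by rewrite Rmax_left; nra.
Qed.

(* Summing a function of the fibre masses of an injection g: every fibre
   holds at most one point, and empty fibres contribute phi z 0 = 0. *)
Lemma sum_fibres_inj (I J : finType) (g : I -> J) (f : I -> R) (phi : J -> R -> R) :
  injective g -> (forall z, phi z 0 = 0) ->
  \sum_(z : J) phi z (\sum_(x | g x == z) f x) = \sum_(x : I) phi (g x) (f x).
Proof.
move=> g_inj phi0; rewrite [RHS](partition_big g xpredT) //=; apply: eq_bigr => z _.
case: (pickP (fun x => g x == z)) => [x0 /eqP gx0 | no_x]; last first.
  by rewrite !big1 ?phi0 // => x; rewrite ?no_x.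
have fibre x : (g x == z) = (x == x0) by rewrite -gx0 (inj_eq g_inj).
by rewrite (big_pred1 x0 fibre) (big_pred1 x0 fibre) gx0.
Qed.

Section Pushforward.
Variables (T Y : finType) (p : T -> R) (g : T -> Y).
Hypothesis p_ge0 : forall x, 0 <= p x.

Lemma pushforward_ge0 (y : Y) : 0 <= pushforward p g y.
Proof. exact: sumR_ge0. Qed.

Lemma pushforward_ge (x : T) : p x <= pushforward p g (g x).
Proof.
rewrite /pushforward (bigD1 x) //= -{1}(Rplus_0_r (p x)).
by apply/Rplus_le_compat_l/sumR_ge0.
Qed.

Lemma sum_ln_pushforward :
  \sum_(x : T) p x * ln (pushforward p g (g x)) = - entropy (pushforward p g).
Proof.
rewrite /entropy /Rsum Ropp_involutive (partition_big g xpredT) //=.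
apply: eq_bigr => y _; rewrite xlnxE; last exact: pushforward_ge0.
rewrite /pushforward big_distrl /=.
by apply: eq_bigr => x /eqP <-.
Qed.

End Pushforward.

Lemma cond_entropy_inj (T X Y : finType) (p : T -> R) (f : T -> X) (g : T -> Y) :
  (forall x, 0 <= p x) -> injective (fun x => (g x, f x)) ->
  cond_entropy p f g = - \sum_(x : T) p x * ln (p x / pushforward p g (g x)).
Proof.
move=> p_ge0 gf_inj; set P := pushforward p g.
pose phi (z : Y * X) u := - (P z.1 * xlnx (u / P z.1)).
have -> : cond_entropy p f g =
    \sum_(z : Y * X) phi z (\sum_(x | (g x, f x) == z) p x).
  pose F y a := phi (y, a) (\sum_(x | (g x, f x) == (y, a)) p x).
  rewrite (eq_bigr (fun z => F z.1 z.2)); last by case.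
  rewrite -pair_bigA /=.
  apply: eq_bigr => y _; rewrite /entropy /Rsum -sumR_opp big_distrr /=.
  apply: eq_bigr => a _; rewrite /F /phi /= Ropp_mult_distr_r.
  by congr (_ * - xlnx (_ / _)); apply: eq_bigl => x; rewrite xpair_eqE andbC.
rewrite sum_fibres_inj //; last by move=> z; rewrite /phi /Rdiv Rmult_0_l xlnx0; ring.
rewrite -sumR_opp; apply: eq_bigr => x _; rewrite /phi /=; congr (- _).
case: (Rle_lt_or_eq_dec _ _ (p_ge0 x)) => [px_gt0 | <-]; last first.
  by rewrite /Rdiv !Rmult_0_l xlnx0; ring.
have Pgx_gt0 : 0 < P (g x).
  by apply: Rlt_le_trans px_gt0 _; apply: pushforward_ge.
rewrite xlnxE; last by apply: Rlt_le; apply: Rdiv_lt_0_compat.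
by field; lra.
Qed.

Lemma kl_ge_hellinger (T : finType) (p q : T -> R) :
  is_distr p -> (forall x, 0 <= q x) -> (forall x, 0 < p x -> 0 < q x) ->
  2 * (1 - Rsum (fun x => sqrt (p x * q x))) <= \sum_(x : T) p x * ln (p x / q x).
Proof.
move=> [p_ge0 p_sum1] q_ge0 supp.
rewrite -p_sum1 /Rsum -sumR_sub big_distrr /=.
apply: sumR_le => x _.
by apply: xlnx_ratio_ge_hellinger; [exact: p_ge0 | exact: q_ge0 | exact: supp].
Qed.

Section CoordinateBlocks.
Variables (I S : finType) (p : {ffun I -> S} -> R).
Local Notation T := {ffun I -> S}.
Hypothesis p_ge0 : forall x, 0 <= p x.
Hypothesis p_sum1 : Rsum p = 1.

Definition agree (J : {set I}) (x y : T) : bool := [forall i in J, x i == y i].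

Definition block_mass (J : {set I}) (x : T) : R := \sum_(y | agree J x y) p y.

Definition block_cond_entropy (K J : {set I}) : R :=
  - \sum_(x : T) p x * ln (block_mass (J :|: K) x / block_mass J x).

Lemma agree_refl (J : {set I}) (x : T) : agree J x x.
Proof. by apply/forallP => i; apply/implyP. Qed.

Lemma agree_sym (J : {set I}) (x y : T) : agree J x y = agree J y x.
Proof. by apply/forallP/forallP => H i; rewrite eq_sym; apply: H. Qed.

Lemma agree_trans (J : {set I}) (x y z : T) : agree J x y -> agree J y z -> agree J x z.
Proof.
move=> /forallP xy /forallP yz; apply/forallP => i; apply/implyP => iJ.
by rewrite (eqP (implyP (xy i) iJ)); exact: implyP (yz i) iJ.
Qed.

Lemma agree_sub (J K : {set I}) (x y : T) : J \subset K -> agree K x y -> agree J x y.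
Proof.
move=> /subsetP JK /forallP xy; apply/forallP => i; apply/implyP => iJ.
exact: implyP (xy i) (JK _ iJ).
Qed.

Lemma agreeU (J K : {set I}) (x y : T) :
  agree (J :|: K) x y = agree J x y && agree K x y.
Proof.
apply/idP/andP => [xy | [/forallP xyJ /forallP xyK]].
  by split; apply: agree_sub xy; [apply: subsetUl | apply: subsetUr].
apply/forallP => i; apply/implyP; rewrite in_setU.
by case/orP => iJK; [exact: implyP (xyJ i) iJK | exact: implyP (xyK i) iJK].
Qed.

Lemma block_mass_ge (J : {set I}) (x : T) : p x <= block_mass J x.
Proof.
rewrite /block_mass (bigD1 x) ?agree_refl //= -{1}(Rplus_0_r (p x)).
by apply/Rplus_le_compat_l/sumR_ge0.
Qed.

Lemma block_mass_ge0 (J : {set I}) (x : T) : 0 <= block_mass J x.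
Proof. exact: sumR_ge0. Qed.

Lemma block_mass_gt0 (J : {set I}) (x : T) : 0 < p x -> 0 < block_mass J x.
Proof. by move=> px_gt0; apply: Rlt_le_trans px_gt0 (block_mass_ge J x). Qed.

Lemma block_mass_agree (J : {set I}) (x y : T) :
  agree J x y -> block_mass J x = block_mass J y.
Proof.
move=> xy; apply: eq_bigl => z; apply/idP/idP => [xz | yz].
  by apply: agree_trans xz; rewrite agree_sym.
exact: agree_trans xy yz.
Qed.

Lemma block_mass0 (x : T) : block_mass set0 x = 1.
Proof.
rewrite -p_sum1; apply: eq_bigl => y.
by apply/forallP => i; rewrite in_set0.
Qed.

Lemma block_massT (x : T) : block_mass setT x = p x.
Proof.
rewrite /block_mass (big_pred1 x) // => y /=; rewrite eq_sym.
apply/forallP/eqP => [xy | ->]; last by move=> i; apply/implyP.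
by apply/ffunP => i; apply/eqP; exact: implyP (xy i) (in_setT i).
Qed.

Lemma block_mass1 (i : I) (x : T) :
  block_mass [set i] x = pushforward p (fun y => y i) (x i).
Proof.
apply: eq_bigl => y /=; rewrite eq_sym; apply/forallP/eqP => [xy | xy j].
  by apply/eqP; exact: implyP (xy i) (set11 i).
by apply/implyP; rewrite in_set1 => /eqP ->; rewrite xy.
Qed.

Definition ind (b : bool) : R := if b then 1 else 0.

Lemma ind_ge0 (b : bool) : 0 <= ind b.
Proof. by case: b => /=; lra. Qed.

Lemma block_mass_ind (J : {set I}) (x : T) :
  block_mass J x = \sum_(y : T) ind (agree J x y) * p y.
Proof.
rewrite /block_mass big_mkcond; apply: eq_bigr => y _.
by rewrite /ind; case: ifP => _; ring.
Qed.

(* For A included in B, the points lying both in the (A u L)-cylinder of z and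
   in the B-cylinder of w form (part of) a single (B u L)-cylinder, which can
   exist only if z and w agree on A; their relative weights sum to at most 1. *)
Lemma agreeing_weight_le1 (A B L : {set I}) (z w : T) : A \subset B ->
  \sum_(x : T) ind (agree (A :|: L) x z) * ind (agree B x w) * (p x / block_mass (B :|: L) x)
  <= ind (agree A z w).
Proof.
move=> AB.
case: (pickP (fun x => agree (A :|: L) x z && agree B x w)) => [x0 /andP [x0z x0w] | none].
  have zw : agree A z w.
    apply: (@agree_trans _ _ x0); last exact: agree_sub AB x0w.
    by rewrite agree_sym; apply: agree_sub x0z; apply: subsetUl.
  rewrite zw /ind /=; set M := block_mass (B :|: L) x0.
  apply: (@Rle_trans _ (\sum_(x | agree (B :|: L) x0 x) p x * / M)); last first.
    by rewrite -big_distrl; apply/Rdiv_self_le1/block_mass_ge0.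
  rewrite [X in _ <= X]big_mkcond; apply: sumR_le => x _.
  have rhs_ge0 : 0 <= if agree (B :|: L) x0 x then p x * / M else 0.
    by case: ifP => _; [apply/Rmult_le_pos/Rinv_ge0/block_mass_ge0 | lra].
  case xz: (agree (A :|: L) x z); case xw: (agree B x w); rewrite /=; try lra.
  have x0x : agree (B :|: L) x0 x.
    rewrite agreeU; apply/andP; split; first by apply: (agree_trans x0w); rewrite agree_sym.
    apply: (@agree_trans _ _ z); first by apply: agree_sub x0z; apply: subsetUr.
    by rewrite agree_sym; apply: agree_sub xz; apply: subsetUr.
  by rewrite x0x /M (block_mass_agree x0x) /Rdiv; lra.
rewrite big1; first exact: ind_ge0.
by move=> x _; case/nandP: (negbT (none x)) => /negbTE ->; rewrite /ind /=; ring.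
Qed.

(* The ratio of the next lemma as a double sum over cylinder representatives,
   writing both numerator masses as sums and using m_A x = m_A z when x agrees
   with z on A u L. *)
Lemma cond_ratio_expand (A B L : {set I}) (x : T) :
  p x * block_mass B x * block_mass (A :|: L) x
      / (block_mass (B :|: L) x * block_mass A x)
  = \sum_(z : T) \sum_(w : T) ind (agree (A :|: L) x z) * ind (agree B x w) *
      (p z * p w / block_mass A z * (p x / block_mass (B :|: L) x)).
Proof.
set m := block_mass.
have -> : p x * m B x * m (A :|: L) x / (m (B :|: L) x * m A x) =
          m (A :|: L) x * m B x * (p x / (m (B :|: L) x * m A x)) by rewrite /Rdiv; ring.
rewrite [m (A :|: L) x]block_mass_ind big_distrl /= big_distrl /=.
apply: eq_bigr => z _; rewrite [m B x]block_mass_ind big_distrr /= big_distrl /=.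
apply: eq_bigr => w _; case xz: (agree (A :|: L) x z); last by rewrite /ind; ring.
have xzA : agree A x z by apply: agree_sub xz; apply: subsetUl.
by rewrite /m (block_mass_agree xzA) /Rdiv Rinv_mult; ring.
Qed.

(* The key estimate behind "conditioning reduces entropy": exchanging the sums,
   the weight of each pair (z, w) is at most [z ~_A w] p z p w / m_A z, and
   these sum to at most 1. *)
Lemma cond_ratio_sum_le1 (A B L : {set I}) : A \subset B ->
  \sum_(x : T) p x * block_mass B x * block_mass (A :|: L) x
               / (block_mass (B :|: L) x * block_mass A x) <= 1.
Proof.
move=> AB; set m := block_mass.
rewrite (eq_bigr _ (fun x _ => cond_ratio_expand A B L x)) exchange_big /=.
apply: (@Rle_trans _ (\sum_(z : T) \sum_(w : T) p z * p w / m A z * ind (agree A z w))).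
  apply: sumR_le => z _; rewrite exchange_big /=; apply: sumR_le => w _.
  have -> : \sum_(x : T) ind (agree (A :|: L) x z) * ind (agree B x w) *
              (p z * p w / m A z * (p x / m (B :|: L) x))
      = p z * p w / m A z *
        \sum_(x : T) ind (agree (A :|: L) x z) * ind (agree B x w) * (p x / m (B :|: L) x).
    by rewrite big_distrr /=; apply: eq_bigr => x _; ring.
  apply: Rmult_le_compat_l; last exact: agreeing_weight_le1.
  by apply: Rmult_le_pos; [apply: Rmult_le_pos | apply/Rinv_ge0/block_mass_ge0].
rewrite -p_sum1; apply: sumR_le => z _.
have -> : \sum_(w : T) p z * p w / m A z * ind (agree A z w) = p z * (m A z * / m A z).
  rewrite /m block_mass_ind big_distrl big_distrr /=.
  by apply: eq_bigr => w _; rewrite /Rdiv; ring.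
rewrite -{2}(Rmult_1_r (p z)); apply: Rmult_le_compat_l => //.
exact/Rdiv_self_le1/block_mass_ge0.
Qed.

Lemma block_cond_entropy_mono (A B L : {set I}) :
  A \subset B -> block_cond_entropy L B <= block_cond_entropy L A.
Proof.
move=> AB; have := cond_ratio_sum_le1 L AB; set m := block_mass.
suff : \sum_(x : T) (p x - p x * m B x * m (A :|: L) x / (m (B :|: L) x * m A x))
   <= \sum_(x : T) (p x * ln (m (B :|: L) x / m B x) - p x * ln (m (A :|: L) x / m A x)).
  have sum1 : \sum_(x : T) p x = 1 := p_sum1.
  rewrite /block_cond_entropy !sumR_sub sum1 -/m.
  set HB := \sum_(x : T) _ * ln (m (B :|: L) x / _); set HA := \sum_(x : T) _ * ln (_ / m A x).
  set Q := \sum_(x : T) _ / _.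
  lra.
apply: sumR_le => x _.
case: (Rle_lt_or_eq_dec _ _ (p_ge0 x)) => [px_gt0 | <-]; last by lra.
have := ln_ratios_ge (block_mass_gt0 (A :|: L) px_gt0) (block_mass_gt0 A px_gt0)
  (block_mass_gt0 (B :|: L) px_gt0) (block_mass_gt0 B px_gt0).
move=> /(Rmult_le_compat_l (p x) _ _ (p_ge0 x)).
by rewrite /Rdiv -/m; lra.
Qed.

End CoordinateBlocks.

Section Permutations.
Variables (I S : finType) (p : {ffun I -> S} -> R).
Local Notation T := {ffun I -> S}.

Definition permute (s : {perm I}) (x : T) : T := [ffun i => x (s i)].

Hypothesis p_exch : forall (s : {perm I}) (x : T), p (permute s x) = p x.

Lemma permute_inj (s : {perm I}) : injective (permute s).
Proof.
move=> x y /ffunP sxy; apply/ffunP => j.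
by have := sxy (s^-1 j)%g; rewrite !ffunE permKV.
Qed.

Lemma agree_permute (s : {perm I}) (J : {set I}) (x y : T) :
  agree J (permute s x) (permute s y) = agree (s @: J) x y.
Proof.
apply/forallP/forallP => xy i; apply/implyP => iJ.
  by case/imsetP: iJ => k kJ ->; have := implyP (xy k) kJ; rewrite !ffunE.
by rewrite !ffunE; exact: implyP (xy (s i)) (imset_f _ iJ).
Qed.

Lemma block_mass_permute (s : {perm I}) (J : {set I}) (x : T) :
  block_mass p J (permute s x) = block_mass p (s @: J) x.
Proof.
rewrite /block_mass (reindex_inj (@permute_inj s)) /=.
by apply: eq_big => [y | y _]; rewrite ?agree_permute ?p_exch.
Qed.

Lemma block_cond_entropy_permute (s : {perm I}) (K J : {set I}) :
  block_cond_entropy p K J = block_cond_entropy p (s @: K) (s @: J).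
Proof.
rewrite /block_cond_entropy (reindex_inj (@permute_inj s)) /=; congr (- _).
by apply: eq_bigr => x _; rewrite !block_mass_permute imsetU p_exch.
Qed.

Lemma coord_law_exchange (i j : I) (a : S) :
  pushforward p (fun x => x i) a = pushforward p (fun x => x j) a.
Proof.
rewrite /pushforward (reindex_inj (@permute_inj (tperm i j))) /=.
by apply: eq_big => [x | x _]; rewrite ?p_exch // ffunE tpermL.
Qed.

Lemma entropy_coord_exchange (i j : I) :
  entropy (pushforward p (fun x => x i)) = entropy (pushforward p (fun x => x j)).
Proof. by congr (- _); apply: eq_bigr => a _; rewrite (coord_law_exchange i j). Qed.

End Permutations.

Section Sequential.
Variables (t : nat) (S : finType) (p : {ffun 'I_t -> S} -> R).
Local Notation T := {ffun 'I_t -> S}.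
Hypothesis p_ge0 : forall x, 0 <= p x.
Hypothesis p_sum1 : Rsum p = 1.

Definition prefix (k : nat) : {set 'I_t} := [set i : 'I_t | (i < k)%nat].

Lemma prefix0 : prefix 0 = set0.
Proof. by apply/setP => i; rewrite !inE. Qed.

Lemma prefix_all : prefix t = setT.
Proof. by apply/setP => i; rewrite !inE ltn_ord. Qed.

Lemma prefixS (k : 'I_t) : prefix k :|: [set k] = prefix k.+1.
Proof. by apply/setP => i; rewrite !inE ltnS [(i <= k)%nat]leq_eqVlt orbC. Qed.

Lemma prefix_sub (k l : nat) : (k <= l)%nat -> prefix k \subset prefix l.
Proof. by move=> kl; apply/subsetP => i; rewrite !inE => /leq_trans; apply. Qed.

Lemma block_cond_entropy_single (k : 'I_t) :
  block_cond_entropy p [set k] set0 = entropy (marginal p k).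
Proof.
rewrite /block_cond_entropy -[RHS]Ropp_involutive -(sum_ln_pushforward _ p_ge0).
congr (- _); apply: eq_bigr => x _.
by rewrite set0U block_mass0 // block_mass1 /Rdiv Rinv_1 Rmult_1_r.
Qed.

Lemma entropy_chain_rule :
  entropy p = \sum_(k < t) block_cond_entropy p [set k] (prefix k).
Proof.
rewrite /entropy /Rsum /block_cond_entropy sumR_opp exchange_big /=; congr (- _).
apply: eq_bigr => x _; rewrite xlnxE // -big_distrr /=.
case: (Rle_lt_or_eq_dec _ _ (p_ge0 x)) => [px_gt0 | <-]; last by rewrite !Rmult_0_l.
pose f k := ln (block_mass p (prefix k) x).
rewrite (eq_bigr (fun k : 'I_t => f k.+1 - f k)); last first.
  by move=> k _; rewrite prefixS ln_div //; apply: block_mass_gt0.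
by rewrite -(big_mkord xpredT (fun k => f k.+1 - f k)) telescopeR /f prefix0 prefix_all
  block_mass0 // block_massT ln_1 Rminus_0_r.
Qed.

Lemma entropy_subadditive : entropy p <= \sum_(k < t) entropy (marginal p k).
Proof.
rewrite entropy_chain_rule; apply: sumR_le => k _.
by rewrite -block_cond_entropy_single //; apply: block_cond_entropy_mono => //; apply: sub0set.
Qed.

Lemma pushforward_init (x : T) :
  pushforward p (@init_coords t S) (init_coords x) = block_mass p (prefix t.-1) x.
Proof.
apply: eq_bigl => z /=; apply/eqP/forallP => [zx i | xz].
  apply/implyP; rewrite inE => it.
  have := congr1 (fun f : {ffun 'I_t.-1 -> S} => f (Ordinal it)) zx; rewrite !ffunE.
  have -> : widen_ord (leq_pred t) (Ordinal it) = i by apply: val_inj.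
  by move=> ->.
apply/ffunP => i; rewrite !ffunE.
by have := implyP (xz (widen_ord (leq_pred t) i)); rewrite inE /= ltn_ord => /(_ isT) /eqP ->.
Qed.

Lemma init_last_inj (t_gt0 : (0 < t)%nat) :
  injective (fun x : T => (@init_coords t S x, x (lastIdx t_gt0))).
Proof.
move=> x y [init_xy last_xy]; apply/ffunP => i.
case: (ltnP i t.-1) => it.
  have := congr1 (fun f : {ffun 'I_t.-1 -> S} => f (Ordinal it)) init_xy; rewrite !ffunE.
  by have -> : widen_ord (leq_pred t) (Ordinal it) = i by apply: val_inj.
have -> : i = lastIdx t_gt0 by apply: val_inj => /=; have := ltn_ord i; lia.
exact: last_xy.
Qed.

Lemma cond_entropy_last (t_gt0 : (0 < t)%nat) :
  cond_entropy p (fun x => x (lastIdx t_gt0)) (@init_coords t S)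
  = block_cond_entropy p [set lastIdx t_gt0] (prefix (lastIdx t_gt0)).
Proof.
rewrite cond_entropy_inj //; last exact: init_last_inj.
rewrite /block_cond_entropy prefixS /= prednK // prefix_all; congr (- _).
by apply: eq_bigr => x _; rewrite pushforward_init block_massT.
Qed.

Lemma prod_marginals_ge0 (x : T) : 0 <= prod_marginals p x.
Proof.
apply: (big_ind (fun u => 0 <= u)) => [| u v | i _]; first lra.
  exact: Rmult_le_pos.
exact: pushforward_ge0.
Qed.

Lemma prod_marginals_gt0 (x : T) : 0 < p x -> 0 < prod_marginals p x.
Proof.
move=> px_gt0; apply: (big_ind (fun u => 0 < u)) => [| u v | i _]; first lra.
  exact: Rmult_lt_0_compat.
by rewrite /marginal -block_mass1; apply: block_mass_gt0.
Qed.

Lemma kl_prod_marginals :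
  \sum_(x : T) p x * ln (p x / prod_marginals p x)
  = \sum_(k < t) entropy (marginal p k) - entropy p.
Proof.
have pointwise x : p x * ln (p x / prod_marginals p x)
    = xlnx (p x) - \sum_(k < t) p x * ln (marginal p k (x k)).
  rewrite xlnxE // -big_distrr /=.
  case: (Rle_lt_or_eq_dec _ _ (p_ge0 x)) => [px_gt0 | <-]; last by rewrite !Rmult_0_l; ring.
  rewrite ln_div //; last exact: prod_marginals_gt0.
  rewrite /prod_marginals (@ln_prod _ _ (fun k => marginal p k (x k))); first by ring.
  by move=> k; rewrite /marginal -block_mass1; apply: block_mass_gt0.
rewrite (eq_bigr _ (fun x _ => pointwise x)) sumR_sub exchange_big /=.
rewrite (eq_bigr (fun k => - entropy (marginal p k))); last first.
  by move=> k _; apply: sum_ln_pushforward.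
have sum_xlnx : \sum_(x : T) xlnx (p x) = - entropy p.
  by rewrite /entropy /Rsum Ropp_involutive.
by rewrite sumR_opp sum_xlnx; ring.
Qed.

Hypothesis p_exch : forall (s : {perm 'I_t}) (x : T), p (permute s x) = p x.

(* For an exchangeable law, H(X_(t-1) | X_0, ..., X_(t-2)) is the smallest term
   of the chain rule: relabel k as the last coordinate, then condition on more. *)
Lemma last_cond_entropy_le (l k : 'I_t) : (l : nat) = t.-1 ->
  block_cond_entropy p [set l] (prefix l) <= block_cond_entropy p [set k] (prefix k).
Proof.
move=> l_last; set s := tperm k l.
have fixed : {in prefix k, s =1 (fun i => i)}.
  move=> i; rewrite inE => ik; have kt := ltn_ord k.
  by apply: tpermD; apply/eqP => /(congr1 (@nat_of_ord t)); lia.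
rewrite [X in _ <= X](block_cond_entropy_permute p_exch s) imset_set1.
rewrite (eq_in_imset fixed) imset_id /s tpermL.
apply: block_cond_entropy_mono => //; apply: prefix_sub.
by have := ltn_ord k; rewrite l_last; lia.
Qed.

Lemma last_cond_entropy_scaled_le (l : 'I_t) : (l : nat) = t.-1 ->
  INR t * block_cond_entropy p [set l] (prefix l) <= entropy p.
Proof.
move=> l_last; rewrite entropy_chain_rule -sumR_const_ord.
by apply: sumR_le => k _; apply: last_cond_entropy_le.
Qed.

End Sequential.

Lemma scaled_bound_weaken (n c H a : R) :
  1 <= n -> 0 <= a -> n * c <= n * H - a -> c <= H - a / n ^ 2.
Proof.
move=> n_ge1 a_ge0 le_nc; have n2_gt0 : 0 < n ^ 2 by nra.
apply: (Rmult_le_reg_l (n ^ 2)) => //.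
have -> : n ^ 2 * (H - a / n ^ 2) = n ^ 2 * H - a by field; lra.
nra.
Qed.

Local Close Scope R_scope.

Theorem lemma3p3 (t : nat) (ht : (2 <= t)%N) (S : finType)
  (p : {ffun 'I_t -> S} -> R) (eps : R) :
  is_distr p ->
  exchangeable p ->
  (0 <= eps)%R ->
  (hellinger p (prod_marginals p) >= eps)%R ->
  (cond_entropy p (fun x => x (lastIdx (ltnW ht))) (@init_coords t S)
     <= entropy (marginal p (firstIdx (ltnW ht))) - 2 * eps ^ 2 / (INR t) ^ 2)%R.
Proof.
move=> p_distr p_exch eps_ge0 /Rge_le eps_le; case: (p_distr) => p_ge0 p_sum1.
rewrite /hellinger in eps_le; set H1 := entropy _; set BC := Rsum _ in eps_le.
pose KL := (\sum_(x : {ffun 'I_t -> S}) p x * ln (p x / prod_marginals p x))%R.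
have t_ge1 : (1 <= INR t)%R by apply: (le_INR 1); apply/leP; exact: ltnW.
have sum_marginals : (\sum_(k < t) entropy (marginal p k) = INR t * H1)%R.
  by rewrite -sumR_const_ord; apply: eq_bigr => k _; apply: entropy_coord_exchange.
have KLE : KL = (INR t * H1 - entropy p)%R.
  by rewrite /KL kl_prod_marginals // sum_marginals.
have KL_ge0 : (0 <= KL)%R.
  by rewrite KLE -sum_marginals; have := entropy_subadditive p_ge0 p_sum1; lra.
have KL_hel : (2 * (1 - BC) <= KL)%R.
  by apply: kl_ge_hellinger => //; [exact: prod_marginals_ge0 | exact: prod_marginals_gt0].
have eps2 := sqrt_lower_bound eps_ge0 eps_le.
have KL_eps : (2 * eps ^ 2 <= KL)%R.
  have : (Rmax 0 (1 - BC) <= KL / 2)%R by apply: Rmax_lub; lra.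
  lra.
rewrite cond_entropy_last //; apply: scaled_bound_weaken => //; first by nra.
have := last_cond_entropy_scaled_le p_ge0 p_sum1 p_exch (l := lastIdx (ltnW ht)) erefl.
lra.
Qed.
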